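(* Let $d\geq 2$ and $U=(u_{ij})\in\mathcal{U}_d(\mathbb{C})$. If for some permutation matrix $\Pi$ and some $D\in\mathcal{DU}_d(\mathbb{C})$ $$\|U-D\Pi\|_{\mathrm{HS}}^2<2-2\sqrt{\frac{1+\frac{1}{\sqrt d}}{2}},$$ then Alice and Bob are not able to generate a maximally mutually coherent state with just three strokes of the coherence engine, i.e., there are no $l\in\{1,\dots,d\}$ and $D_1,D_2\in\mathcal{DU}_d(\mathbb{C})$ such that $D_2U^\dagger D_1U|l\rangle$ is maximally mutually coherent.
   Context: $\|\cdot\|_{\mathrm{HS}}$ is the Hilbert–Schmidt norm. $\mathcal{U}_d(\mathbb{C})$ denotes the group of $d\times d$ unitary matrices and $\mathcal{DU}_d(\mathbb{C})$ its subgroup of diagonal unitary matrices; $\{|j\rangle\}$ is the computational basis (Alice's basis) and Bob's basis is $\{U^\dagger|j\rangle\}$. Alice's free operations are $\mathcal{DU}_d(\mathbb{C})$, Bob's are $\{U^\dagger DU:D\in\mathcal{DU}_d(\mathbb{C})\}$; a three-stroke protocol: Alice prepares $|l\rangle$, Bob applies $U^\dagger D_1U$, Alice applies $D_2$. A pure state $|\psi\rangle$ is maximally mutually coherent if $|\langle j|\psi\rangle|=|\langle j|U|\psi\rangle|=1/\sqrt d$ for all $j$. *)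

From HB Require Import structures.
From mathcomp Require Import all_boot all_order all_fingroup all_algebra.
From mathcomp Require Import reals.
From mathcomp Require Import complex.
Set Implicit Arguments. Unset Strict Implicit. Unset Printing Implicit Defensive.
Import Order.TTheory GRing.Theory Num.Theory.
Local Open Scope ring_scope.
Local Open Scope complex_scope.

Definition adj {C : numClosedFieldType} {m n} (A : 'M[C]_(m, n)) : 'M[C]_(n, m) :=
  map_mx Num.conj (A^T).
(* unitary matrices: the library's  U \is unitarymx  (spectral.v) *)

Definition is_diag_unitary {C : numClosedFieldType} {d} (D : 'M[C]_d) : Prop :=
  exists v : 'rV[C]_d, D = diag_mx v /\ forall i, `|v 0 i| = 1.

Definition hs_norm2 {C : numClosedFieldType} {m n} (A : 'M[C]_(m, n)) : C :=
  \sum_(i < m) \sum_(j < n) `|A i j| ^+ 2.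

Definition ket {C : numClosedFieldType} {d} (l : 'I_d) : 'cV[C]_d := delta_mx l 0.

(* maximally mutually coherent w.r.t. bases {|j>} and {U^dagger |j>}:
   |<j|psi>| = |<j|U|psi>| = 1/sqrt d for all j *)
Definition max_mutually_coherent {C : numClosedFieldType} {d} (U : 'M[C]_d)
    (psi : 'cV[C]_d) : Prop :=
  forall j : 'I_d, `|psi j 0| = (sqrtC (d%:R : C))^-1 /\
                   `|(U *m psi) j 0| = (sqrtC (d%:R : C))^-1.

From HB Require Import structures.
From mathcomp Require Import all_boot all_order all_fingroup all_algebra.
From mathcomp Require Import reals.
From mathcomp Require Import complex.
From mathcomp Require Import ring.
Set Implicit Arguments. Unset Strict Implicit. Unset Printing Implicit Defensive.
Import Order.TTheory GRing.Theory Num.Theory.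
Local Open Scope ring_scope.

(* Let [k = s^-1 l] be the row where [D Pi] puts the nonzero entry of column [l],
   and [a = |u_kl|].  Column [l] of [U] is a unit vector, so its mass away from
   row [k] is [1 - a^2] and the Hilbert-Schmidt distance is at least
   [(1 - a)^2 + (1 - a^2) = 2 - 2a]; the hypothesis thus forces
   [a^2 > (1 + 1/sqrt d) / 2].  On the other hand the [l]-th entry of
   [D2 U^* D1 U |l>] is a unimodular multiple of [sum_j v1_j |u_jl|^2], whose
   modulus is at least [a^2 - (1 - a^2) = 2a^2 - 1 > 1/sqrt d], so it cannot
   have modulus [1/sqrt d]. *)

Section NormBounds.
Variable R : numDomainType.

Lemma norm_sum_unimodular_ge (I : finType) (w p : I -> R) (k : I) :
  (forall j, `|w j| = 1) -> (forall j, 0 <= p j) ->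
  p k - \sum_(j | j != k) p j <= `|\sum_j w j * p j|.
Proof.
move=> w1 p0; rewrite [\sum_j _](bigD1 k) //=.
have normwp j : `|w j * p j| = p j by rewrite normrM w1 mul1r ger0_norm.
apply: le_trans (lerB_normD _ _); rewrite normwp lerD2l lerN2.
apply: le_trans (ler_norm_sum _ _ _) _.
by apply: ler_sum => j _; rewrite normwp.
Qed.

Lemma sqr_dist_unimodular_ge (x v : R) :
  `|v| = 1 -> (1 - `|x|) ^+ 2 <= `|x - v| ^+ 2.
Proof.
move=> v1; rewrite -real_normK ?rpredB ?normr_real ?real1 //.
apply: lerXn2r; rewrite ?nnegrE //.
by rewrite -v1 distrC ler_dist_dist.
Qed.

End NormBounds.

Section CoherenceEngine.
Variable C : numClosedFieldType.

Lemma unitarymx_col_norm2 d (U : 'M[C]_d) (l : 'I_d) :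
  U \is unitarymx -> \sum_j `|U j l| ^+ 2 = 1.
Proof.
move=> /unitarymxP /mulmx1C /(congr1 (fun M : 'M[C]_d => M l l)).
rewrite !mxE eqxx /= => col1; rewrite -[RHS]col1.
by apply: eq_bigr => j _; rewrite !mxE normCKC.
Qed.

Lemma unitarymx_col_norm2_off d (U : 'M[C]_d) (k l : 'I_d) :
  U \is unitarymx -> \sum_(j | j != k) `|U j l| ^+ 2 = 1 - `|U k l| ^+ 2.
Proof.
move=> /(unitarymx_col_norm2 l); rewrite (bigD1 k) //= => <-.
by rewrite addrAC subrr add0r.
Qed.

Lemma three_stroke_diag_entry d (U : 'M[C]_d) (v1 v2 : 'rV[C]_d) (l : 'I_d) :
  (diag_mx v2 *m adj U *m diag_mx v1 *m U *m ket l) l 0 =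
  v2 0 l * \sum_j v1 0 j * `|U j l| ^+ 2.
Proof.
rewrite -!mulmxA /ket -colE !mul_diag_mx !mxE; congr (_ * _).
by apply: eq_bigr => j _; rewrite /adj !mxE normCKC mulrCA.
Qed.

Lemma three_stroke_diag_entry_ge d (U : 'M[C]_d) (v1 v2 : 'rV[C]_d)
    (k l : 'I_d) :
  U \is unitarymx -> (forall j, `|v1 0 j| = 1) -> (forall j, `|v2 0 j| = 1) ->
  2 * `|U k l| ^+ 2 - 1 <=
    `|(diag_mx v2 *m adj U *m diag_mx v1 *m U *m ket l) l 0|.
Proof.
move=> /(unitarymx_col_norm2_off k l) colS v1u v2u.
rewrite three_stroke_diag_entry normrM v2u mul1r.
have -> : 2 * `|U k l| ^+ 2 - 1 = `|U k l| ^+ 2 - \sum_(j | j != k) `|U j l| ^+ 2.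
  by rewrite colS; ring.
by apply: norm_sum_unimodular_ge => // j; exact: exprn_ge0.
Qed.

Lemma hs_norm2_col_ge d (U : 'M[C]_d) (v : 'rV[C]_d) (s : 'S_d) (k l : 'I_d) :
  s k = l ->
  `|U k l - v 0 k| ^+ 2 + \sum_(j | j != k) `|U j l| ^+ 2
    <= hs_norm2 (U - diag_mx v *m perm_mx s).
Proof.
move=> skl; have sum_ge0 (P : pred 'I_d) (F : 'I_d -> C) :
  0 <= \sum_(j | P j) `|F j| ^+ 2 by apply: sumr_ge0 => *; exact: exprn_ge0.
rewrite /hs_norm2 [leRHS](bigD1 k) //=; apply: lerD.
  rewrite [leRHS](bigD1 l) //= mul_diag_mx perm_mxEsub !mxE skl eqxx mulr1.
  by rewrite lerDl.
apply: ler_sum => j jk.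
rewrite [leRHS](bigD1 l) //= mul_diag_mx perm_mxEsub !mxE.
have /negbTE -> : s j != l by rewrite -skl (inj_eq perm_inj).
by rewrite mulr0 subr0 lerDl.
Qed.

Lemma hs_norm2_unitary_ge d (U : 'M[C]_d) (v : 'rV[C]_d) (s : 'S_d)
    (k l : 'I_d) :
  U \is unitarymx -> (forall j, `|v 0 j| = 1) -> s k = l ->
  2 - 2 * `|U k l| <= hs_norm2 (U - diag_mx v *m perm_mx s).
Proof.
move=> /(unitarymx_col_norm2_off k l) colS vu skl.
apply: le_trans (hs_norm2_col_ge U v skl).
have -> : 2 - 2 * `|U k l| =
          (1 - `|U k l|) ^+ 2 + \sum_(j | j != k) `|U j l| ^+ 2.
  by rewrite colS; ring.
by rewrite lerD2r sqr_dist_unimodular_ge.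
Qed.

Lemma le_sqrtC (a x : C) : 0 <= a -> a ^+ 2 <= x -> a <= sqrtC x.
Proof.
move=> a0 ax; rewrite -(sqrCK a0) ler_sqrtC // nnegrE.
  exact: exprn_ge0.
exact: le_trans (exprn_ge0 2 a0) ax.
Qed.

End CoherenceEngine.

Theorem proposition16 (R : realType) (d : nat) (hd : (2 <= d)%N) (U : 'M[complex R]_d)
  (hU : U \is unitarymx) (s : 'S_d) (D : 'M[complex R]_d) (hD : is_diag_unitary D)
  (hclose : hs_norm2 (U - D *m perm_mx s) <
            2 - 2 * sqrtC ((1 + (sqrtC (d%:R : complex R))^-1) / 2)) :
  ~ exists (l : 'I_d) (D1 D2 : 'M[complex R]_d),
      is_diag_unitary D1 /\ is_diag_unitary D2 /\
      max_mutually_coherent U (D2 *m adj U *m D1 *m U *m ket l).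
Proof.
case=> l [_ [_ [[v1 [-> v1u]] [[v2 [-> v2u]] /(_ l) [coh_l _]]]]].
case: hD hclose => v [-> vu]; set r := (sqrtC _)^-1 in coh_l *.
pose k := (s^-1)%g l; have skl : s k = l := permKV s l.
have a_le : `|U k l| <= sqrtC ((1 + r) / 2).
  apply: le_sqrtC => //; rewrite ler_pdivlMr // mulrC -lerBlDl -coh_l.
  exact: three_stroke_diag_entry_ge.
have hs_ge : 2 - 2 * sqrtC ((1 + r) / 2) <= hs_norm2 (U - diag_mx v *m perm_mx s).
  apply: le_trans (hs_norm2_unitary_ge hU vu skl).
  by rewrite lerD2l lerN2; apply: ler_wpM2l.
by move/(le_lt_trans hs_ge); rewrite ltxx.
Qed.
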